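(* Let $G$ be a finite, simple, connected graph and let $e \in E(G)$ be an edge that is not a cut edge of $G$. Then $$\chi_{dd}(G)-1 \leq \chi_{dd}(G-e) \leq \chi_{dd}(G)+2,$$ where $G-e$ is the graph obtained from $G$ by removing the edge $e$ (keeping all vertices).
   Context: All graphs are finite, undirected and simple. For a vertex $w$, $N(w)$ is its open neighborhood and $N[w]=N(w)\cup\{w\}$ its closed neighborhood. A vertex $w$ dominates a set $S$ of vertices if $S \subseteq N[w]$. A domination coloring of a graph $H$ is a proper vertex coloring of $H$ (adjacent vertices receive different colors; a color class is the set of all vertices receiving a given color) such that every vertex of $H$ dominates at least one color class (possibly its own class), and every color class is dominated by at least one vertex of $H$. The domination chromatic number $\chi_{dd}(H)$ is the minimum number of color classes in a domination coloring of $H$. *)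

(* A finite simple graph is a symmetric irreflexive relation
   adj : rel T on a finType T (vertex set = T). *)
From mathcomp Require Import all_boot.
Set Implicit Arguments. Unset Strict Implicit. Unset Printing Implicit Defensive.

Section DomColoring.
Variable T : finType.

Definition cnbhd (adj : rel T) (w : T) : {set T} := [set x | (x == w) || adj w x].

Definition dominates (adj : rel T) (w : T) (S : {set T}) : bool := S \subset cnbhd adj w.

Definition color_class (K : finType) (c : T -> K) (i : K) : {set T} := [set x | c x == i].

Definition used_colors (K : finType) (c : T -> K) : {set K} := [set c x | x in T].

Definition proper_coloring (adj : rel T) (K : finType) (c : T -> K) : bool :=
  [forall x, forall y, adj x y ==> (c x != c y)].

Definition domination_coloring (adj : rel T) (K : finType) (c : T -> K) : bool :=
  [&& proper_coloring adj c,
      [forall w, exists i in used_colors c, dominates adj w (color_class c i)] &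
      [forall i in used_colors c, exists w, dominates adj w (color_class c i)]].

(* Colors can be taken in 'I_#|T| without loss of generality (relabeling);
   the discrete coloring (all vertices distinct) is always a domination
   coloring, so the default value #|T| is attained anyway. *)
Definition chi_dd (adj : rel T) : nat :=
  \big[minn/#|T|]_(c : {ffun T -> 'I_#|T|} | domination_coloring adj c)
     #|used_colors c|.

Definition remove_edge (adj : rel T) (u v : T) : rel T :=
  fun x y => adj x y && ~~ (((x == u) && (y == v)) || ((x == v) && (y == u))).

Definition simple_graph (adj : rel T) : Prop := symmetric adj /\ irreflexive adj.

Definition connected_graph (adj : rel T) : Prop := forall x y, connect adj x y.

(* uv is a cut edge: its removal increases the number of components, i.e. some
   two vertices connected in G are disconnected in G - uv *)
Definition cut_edge (adj : rel T) (u v : T) : Prop :=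
  exists x y, connect adj x y /\ ~~ connect (remove_edge adj u v) x y.

End DomColoring.

(* Given a domination coloring of one of G, G - uv, recolor one endpoint of uv
   (to color G), resp. both endpoints (to color G - uv), with fresh singleton
   colors; this costs at most one, resp. two, colors and makes the edge uv
   harmless for properness.  A singleton {s} is dominated by s.  Every other
   class only loses the recolored vertices, and the only neighbours lost from
   G to G - uv are u and v themselves, so it stays dominated.  A vertex that
   dominated an old class C still dominates what is left of C, or, if nothing
   is left, one of the new singletons inside C. *)
From mathcomp Require Import all_boot.
Set Implicit Arguments. Unset Strict Implicit. Unset Printing Implicit Defensive.

Section ColorClasses.
Variable T : finType.
Implicit Types adj : rel T.

Lemma domination_coloringP adj (K : finType) (c : T -> K) :
  reflect [/\ forall x y, adj x y -> c x != c y,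
              forall w, exists x, dominates adj w (color_class c (c x)) &
              forall x, exists w, dominates adj w (color_class c (c x))]
          (domination_coloring adj c).
Proof.
apply: (iffP and3P) => [[/forallP pr /forallP d1 /forallP d2]|[pr d1 d2]]; split.
- by move=> x y; apply/implyP/(forallP (pr x)).
- by move=> w; case/existsP: (d1 w) => _ /andP[/imsetP[x _ ->] dom]; exists x.
- move=> x; have /existsP[w dom] := implyP (d2 (c x)) (imset_f c (isT : x \in T)).
  by exists w.
- by apply/forallP => x; apply/forallP => y; apply/implyP/pr.
- apply/forallP => w; case: (d1 w) => x dom; apply/existsP; exists (c x).
  by rewrite dom andbT imset_f.
- apply/forallP => i; apply/implyP => /imsetP[x _ ->].
  by case: (d2 x) => w dom; apply/existsP; exists w.
Qed.

Definition color_classes (K : finType) (c : T -> K) : {set {set T}} :=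
  [set color_class c (c x) | x in T].

Lemma card_color_classes (K : finType) (c : T -> K) :
  #|color_classes c| = #|used_colors c|.
Proof.
rewrite /color_classes (imset_comp (color_class c) c) card_in_imset //.
move=> _ _ /imsetP[x _ ->] /imsetP[y _ ->] same.
have : x \in color_class c (c x) by rewrite inE.
by rewrite same inE => /eqP.
Qed.

Section SameClasses.
Variables (K K' : finType) (c : T -> K) (d : T -> K').
Hypothesis same_classes : forall x y, (c x == c y) = (d x == d y).

Lemma color_class_same_classes x : color_class c (c x) = color_class d (d x).
Proof. by apply/setP => y; rewrite !inE same_classes. Qed.

Lemma card_used_colors_same_classes : #|used_colors c| = #|used_colors d|.
Proof.
rewrite -(card_color_classes c) -(card_color_classes d) /color_classes.
by under eq_imset => x do rewrite color_class_same_classes.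
Qed.

Lemma domination_coloring_same_classes adj :
  domination_coloring adj c = domination_coloring adj d.
Proof.
have classE := color_class_same_classes.
apply/domination_coloringP/domination_coloringP => -[pr d1 d2]; split.
- by move=> x y /pr; rewrite same_classes.
- by move=> w; case: (d1 w) => x; exists x; rewrite -classE.
- by move=> x; case: (d2 x) => w; exists w; rewrite -classE.
- by move=> x y /pr; rewrite same_classes.
- by move=> w; case: (d1 w) => x; exists x; rewrite classE.
- by move=> x; case: (d2 x) => w; exists w; rewrite classE.
Qed.

End SameClasses.

Lemma geq_big_minn (I : eqType) (r : seq I) (P : pred I) (F : I -> nat) x i :
  i \in r -> P i -> \big[minn/x]_(j <- r | P j) F j <= F i.
Proof.
elim: r => //= a r IHr; rewrite inE big_cons => /orP[/eqP <- -> | ri Pi].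
  exact: geq_minl.
by case: (P a); [apply: leq_trans (geq_minr _ _) _|]; apply: IHr.
Qed.

Lemma chi_dd_le_card adj (K : finType) (c : T -> K) :
  domination_coloring adj c -> chi_dd adj <= #|used_colors c|.
Proof.
(* Label each class by the rank of a canonical representative, in 'I_#|T|. *)
pose rep x := odflt x [pick y | c y == c x].
have c_rep x : c (rep x) = c x.
  by rewrite /rep; case: pickP => [y /eqP //|/(_ x)]; rewrite eqxx.
have rep_eq x y : c x = c y -> rep x = rep y.
  by move=> cxy; rewrite /rep cxy; case: pickP => // /(_ y); rewrite eqxx.
pose d : {ffun T -> 'I_#|T|} := [ffun x => enum_rank (rep x)].
have same_classes x y : (c x == c y) = (d x == d y).
  rewrite !ffunE (inj_eq enum_rank_inj).
  by apply/eqP/eqP => [/rep_eq | same]; last rewrite -c_rep same c_rep.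
rewrite (card_used_colors_same_classes same_classes).
rewrite (domination_coloring_same_classes same_classes) => dom_d.
exact: geq_big_minn (mem_index_enum d) dom_d.
Qed.

Lemma chi_dd_le_card_vertices adj : chi_dd adj <= #|T|.
Proof.
apply: (big_ind (fun n => n <= #|T|)) => // [m n le_m _|c _].
  exact: leq_trans (geq_minl _ _) le_m.
by rewrite -[X in _ <= X]card_ord max_card.
Qed.

Lemma chi_dd_le_add adj adj' k :
  (forall c : {ffun T -> 'I_#|T|},
     domination_coloring adj c -> chi_dd adj' <= #|used_colors c| + k) ->
  chi_dd adj' <= chi_dd adj + k.
Proof.
move=> le_c; rewrite [chi_dd adj]/chi_dd.
apply: (big_ind (fun n => chi_dd adj' <= n + k)) => //.
  exact: leq_trans (chi_dd_le_card_vertices adj') (leq_addr _ _).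
by move=> m n le_m le_n; rewrite /minn; case: ifP.
Qed.

End ColorClasses.

Section Isolate.
Variables (T K : finType) (S : {set T}) (c : T -> K).

Definition isolate (x : T) : T + K := if x \in S then inl x else inr (c x).

Lemma color_class_isolate_in x :
  x \in S -> color_class isolate (isolate x) = [set x].
Proof.
move=> Sx; apply/setP => y; rewrite !inE /isolate Sx.
by case: ifP => // Sy; apply/esym/negbTE; apply: contraFneq Sy => ->.
Qed.

Lemma color_class_isolate_notin x :
  x \notin S -> color_class isolate (isolate x) = color_class c (c x) :\: S.
Proof.
by move=> /negbTE Sx; apply/setP => y; rewrite !inE /isolate Sx; case: ifP.
Qed.

Lemma card_used_colors_isolate :
  #|used_colors isolate| <= #|used_colors c| + #|S|.
Proof.
have sub : used_colors isolate \subset inr @: used_colors c :|: inl @: S.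
  apply/subsetP => _ /imsetP[x _ ->]; rewrite /isolate inE.
  by case: ifP => Sx; rewrite imset_f ?orbT ?imset_f.
apply: leq_trans (subset_leq_card sub) _.
by rewrite cardsU (card_imset _ inr_inj) (card_imset _ inl_inj) leq_subr.
Qed.

Variables adj adj' : rel T.
Hypotheses (irr' : irreflexive adj')
  (subrel_outside_S : {in [predC S] &, forall x y, adj' x y -> adj x y})
  (cnbhd_out : {in [predC S], forall w, cnbhd adj w \subset cnbhd adj' w})
  (cnbhd_in : forall w, cnbhd adj w :\: S \subset cnbhd adj' w).

Lemma isolate_domination_coloring :
  domination_coloring adj c -> domination_coloring adj' isolate.
Proof.
move=> /domination_coloringP[pr d1 d2].
have self_dom s : s \in S -> dominates adj' s (color_class isolate (isolate s)).
  by move=> Ss; rewrite /dominates color_class_isolate_in // sub1set inE eqxx.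
apply/domination_coloringP; split.
- move=> x y xy; rewrite /isolate.
  case: ifP => Sx; case: ifP => Sy //.
    by apply: contraTneq xy => -[->]; rewrite irr'.
  by rewrite (inj_eq inr_inj) pr // subrel_outside_S // inE ?Sx ?Sy.
- move=> w; have [Sw | Sw] := boolP (w \in S); first by exists w; apply: self_dom.
  have [x0 dom0] := d1 w.
  have {}dom0 := subset_trans dom0 (cnbhd_out Sw).
  have [y /andP[Sy cy] | rest0] := pickP [pred y | (y \notin S) & (c y == c x0)].
    exists y; apply: subset_trans dom0; rewrite color_class_isolate_notin //.
    by apply/subsetP => z; rewrite !inE (eqP cy) => /andP[].
  have Sx0 : x0 \in S by have := rest0 x0; rewrite /= eqxx andbT => /negbFE.
  exists x0; rewrite /dominates color_class_isolate_in // sub1set.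
  by apply: (subsetP dom0); rewrite inE.
- move=> x; have [Sx | Sx] := boolP (x \in S); first by exists x; apply: self_dom.
  have [w dom] := d2 x; exists w; apply: subset_trans (cnbhd_in w).
  by rewrite color_class_isolate_notin // setSD.
Qed.

End Isolate.

Section RemoveEdge.
Variables (T : finType) (adj : rel T) (u v : T).

Lemma remove_edge_subrel : subrel (remove_edge adj u v) adj.
Proof. by move=> x y /andP[]. Qed.

Lemma remove_edgeEl x y :
  x \notin [set u; v] -> remove_edge adj u v x y = adj x y.
Proof.
by rewrite /remove_edge !inE negb_or => /andP[/negbTE-> /negbTE->]; rewrite andbT.
Qed.

Lemma remove_edgeEr x y :
  y \notin [set u; v] -> remove_edge adj u v x y = adj x y.
Proof.
rewrite /remove_edge !inE negb_or => /andP[/negbTE-> /negbTE->].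
by rewrite !andbF andbT.
Qed.

Lemma cnbhd_remove_edge_sub w :
  cnbhd (remove_edge adj u v) w \subset cnbhd adj w.
Proof.
apply/subsetP => x; rewrite !inE.
by case/orP=> [-> | /remove_edge_subrel ->]; rewrite ?orbT.
Qed.

End RemoveEdge.

Theorem theorem2 (T : finType) (adj : rel T) (u v : T) :
  simple_graph adj -> connected_graph adj ->
  adj u v -> ~ cut_edge adj u v ->
  chi_dd adj <= chi_dd (remove_edge adj u v) + 1 /\
  chi_dd (remove_edge adj u v) <= chi_dd adj + 2.
Proof.
move=> [_ irr] _ uv _.
have u_neq_v : u != v by apply: contraTneq uv => ->; rewrite irr.
split; apply: chi_dd_le_add => c dom_c.
- rewrite -(cards1 u); apply: leq_trans (card_used_colors_isolate _ _).
  apply: chi_dd_le_card; apply: isolate_domination_coloring dom_c => //.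
  + move=> x y; rewrite !inE /= => xu yu xy.
    by rewrite /remove_edge xy (negbTE xu) (negbTE yu) andbF.
  + by move=> w _; apply: cnbhd_remove_edge_sub.
  + move=> w; apply: subset_trans (subsetDl _ _) _.
    exact: cnbhd_remove_edge_sub.
- have card_uv : #|[set u; v]| = 2 by rewrite cards2 u_neq_v.
  rewrite -card_uv; apply: leq_trans (card_used_colors_isolate _ _).
  apply: chi_dd_le_card; apply: isolate_domination_coloring dom_c.
  + by move=> x; apply/negbTE/negP => /remove_edge_subrel; rewrite irr.
  + by move=> x y _ _; apply: remove_edge_subrel.
  + move=> w; rewrite inE => Sw; apply/subsetP => x.
    by rewrite !inE remove_edgeEl.
  + move=> w; apply/subsetP => x; rewrite inE => /andP[Sx].
    by rewrite !inE remove_edgeEr.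
Qed.
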